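(* The Skolem problem is reducible to the Point-To-Point Reachability problem (P2P) for polynomial recursive sequences: there is an algorithm that, given an instance of the Skolem problem (a linear recurrence sequence $u$), computes an instance of P2P (a system of polynomial recursive sequences together with a target vector) such that $u$ has a zero if and only if the system reaches the target vector. Consequently, a decision procedure for P2P would yield a decision procedure for the Skolem problem.
   Context: The Skolem problem: given $k\ge1$, coefficients $a_0,\dots,a_{k-1}\in\mathbb{Q}$ with $a_0\neq0$ and initial values $u(0),\dots,u(k-1)\in\mathbb{Q}$, defining the linear recurrence sequence $u:\mathbb{N}_0\to\mathbb{Q}$ by $u(n+k)=\sum_{i=0}^{k-1}a_iu(n+i)$, decide whether there exists $m\in\mathbb{N}_0$ with $u(m)=0$. The P2P problem: given $k\ge1$, polynomials $p_1,\dots,p_k\in\mathbb{Q}[y_1,\dots,y_k]$, initial values $u_1(0),\dots,u_k(0)\in\mathbb{Q}$, defining sequences by $u_i(n+1)=p_i(u_1(n),\dots,u_k(n))$ for all $n\ge0$, and a target vector $(t_1,\dots,t_k)\in\mathbb{Q}^k$, decide whether there exists $m\in\mathbb{N}_0$ with $u_i(m)=t_i$ for all $1\le i\le k$. *)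

From HB Require Import structures.
From mathcomp Require Import all_boot all_order all_algebra.
From mathcomp Require Import mpoly.
Set Implicit Arguments. Unset Strict Implicit. Unset Printing Implicit Defensive.
Import Order.TTheory GRing.Theory Num.Theory.
Local Open Scope ring_scope.

Definition p2p_seq (k : nat) (p : 'I_k -> {mpoly rat[k]}) (x0 : 'I_k -> rat)
  : nat -> 'I_k -> rat :=
  fun n => iter n (fun v i => (p i).@[v]) x0.

Definition p2p_reaches (k : nat) (p : 'I_k -> {mpoly rat[k]}) (x0 t : 'I_k -> rat)
  : Prop :=
  exists m : nat, forall i : 'I_k, p2p_seq p x0 m i = t i.

(* Companion map of u(n+k+1) = sum_i a_i u(n+i), as polynomials in y_0..y_k:
   y_i |-> y_{i+1} for i < k, and y_k |-> sum_j a_j y_j. *)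
Definition companion_poly (k : nat) (a : 'I_k.+1 -> rat) (i : 'I_k.+1)
  : {mpoly rat[k.+1]} :=
  if (i < k)%N then 'X_(inord i.+1) else \sum_(j < k.+1) a j *: 'X_j.

Definition skolem_p2p_polys (k : nat) (a : 'I_k.+1 -> rat) (i : 'I_k.+1)
  : {mpoly rat[k.+1]} :=
  'X_ord0 * companion_poly a i.

Definition skolem_p2p_init (k : nat) (u : nat -> rat) : 'I_k.+1 -> rat :=
  fun i => u (val i).
Definition skolem_p2p_target (k : nat) : 'I_k.+1 -> rat := fun _ => 0.

From HB Require Import structures.
From mathcomp Require Import all_boot all_order all_algebra.
From mathcomp Require Import mpoly.
Set Implicit Arguments.
Unset Strict Implicit.
Unset Printing Implicit Defensive.
Import Order.TTheory GRing.Theory Num.Theory.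
Local Open Scope ring_scope.

(* The reduction keeps the window (u(n), ..., u(n+k)) scaled by a weight w(n):
   y_i(n) = w(n) u(n+i).  Multiplying the companion step by y_0 turns the
   weight into w(n+1) = w(n)^2 u(n), which vanishes exactly when some u(j)
   with j <= n does, and from then on every y_i is 0.  Hence the zero vector
   is reached iff u has a zero. *)

Fixpoint zero_weight (R : idomainType) (u : nat -> R) (n : nat) : R :=
  if n is n'.+1 then zero_weight u n' ^+ 2 * u n' else 1.

Lemma zero_weight_eq0 (R : idomainType) (u : nat -> R) (n : nat) :
  zero_weight u n = 0 <-> exists2 j, (j < n)%N & u j = 0.
Proof.
elim: n => [|n IHn] /=.
  by split=> [/eqP|[]]; rewrite ?oner_eq0.
split.
  move/eqP; rewrite mulf_eq0 expf_eq0 /= => /orP[/eqP/IHn[j ltjn uj0]|/eqP un0].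
    by exists j => //; apply: ltnW.
  by exists n.
case=> j; rewrite ltnS leq_eqVlt => /orP[/eqP-> -> | ltjn uj0].
  by rewrite mulr0.
by rewrite (proj2 IHn (ex_intro2 _ _ j ltjn uj0)) expr0n mul0r.
Qed.

Lemma p2p_seqS (k : nat) (p : 'I_k -> {mpoly rat[k]}) (x0 : 'I_k -> rat) n i :
  p2p_seq p x0 n.+1 i = (p i).@[p2p_seq p x0 n].
Proof. by rewrite /p2p_seq iterS. Qed.

Section SkolemReduction.

Variables (k : nat) (a : 'I_k.+1 -> rat) (u : nat -> rat).
Hypothesis hu : forall n, u (n + k.+1)%N = \sum_(i < k.+1) a i * u (n + i)%N.

Lemma meval_companion_window (c : rat) (n : nat) (i : 'I_k.+1) :
  (companion_poly a i).@[fun j : 'I_k.+1 => c * u (n + j)%N]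
    = c * u (n.+1 + i)%N.
Proof.
rewrite /companion_poly; case: ifP => ltik.
  by rewrite mevalXU inordK ?ltnS // addnS.
have -> : (n.+1 + i = n + k.+1)%N.
  by move: (ltn_ord i); rewrite ltnS leq_eqVlt ltik orbF => /eqP ->; rewrite addSnnS.
rewrite raddf_sum /= hu mulr_sumr; apply: eq_bigr => j _.
by rewrite mevalZ mevalXU mulrCA.
Qed.

Lemma skolem_p2p_seqE (n : nat) (i : 'I_k.+1) :
  p2p_seq (skolem_p2p_polys a) (skolem_p2p_init u) n i
    = zero_weight u n * u (n + i)%N.
Proof.
elim: n i => [|n IHn] i; first by rewrite /p2p_seq /= mul1r.
rewrite p2p_seqS /skolem_p2p_polys mevalM mevalXU.
rewrite (meval_eq _ IHn) meval_companion_window IHn addn0 /=.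
by rewrite mulrACA -expr2 mulrA.
Qed.

End SkolemReduction.

Theorem theorem3p3 (k : nat) (a : 'I_k.+1 -> rat) (ha0 : a ord0 != 0)
    (u : nat -> rat)
    (hu : forall n : nat, u (n + k.+1)%N = \sum_(i < k.+1) a i * u (n + i)%N) :
  (exists m : nat, u m = 0) <->
  p2p_reaches (skolem_p2p_polys a) (skolem_p2p_init u) (@skolem_p2p_target k).
Proof.
(* [ha0] is part of the Skolem input format; the reduction does not need it. *)
rewrite /p2p_reaches /skolem_p2p_target.
split=> [[m um0] | [m reach0]].
  have wm0 : zero_weight u m.+1 = 0 by apply/zero_weight_eq0; exists m.
  by exists m.+1 => i; rewrite (skolem_p2p_seqE hu) wm0 mul0r.
move: (reach0 ord0); rewrite (skolem_p2p_seqE hu) addn0 => /eqP.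
rewrite mulf_eq0 => /orP[/eqP/zero_weight_eq0[j _ uj0] | /eqP um0].
  by exists j.
by exists m.
Qed.
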